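(* Let $p$ be an odd prime and $q\in\mathbb C_p$ with $|1-q|_p<p^{-1/(p-1)}$. For $k,n\in\mathbb Z_+$ with $n\ge k$, $$\int_{\mathbb Z_p}\frac{B_{k,n}(x,q)}{\binom nk}\,d\mu_{-1}(x)=\sum_{m=0}^\infty\sum_{l=0}^{n-k}\binom{l+m-1}{m}\binom{n-k}{l}(-1)^{l+m}q^l(q-1)^mE_{l+m+k,q}.$$
   Context: For $x\in\mathbb Z_p$, $[x]_q=\frac{1-q^x}{1-q}$. The modified $q$-Bernstein polynomials are $B_{k,n}(x,q)=\binom nk[x]_q^k[1-x]_q^{n-k}$ for $0\le k\le n$. The fermionic $p$-adic integral of a uniformly differentiable $f:\mathbb Z_p\to\mathbb C_p$ is $\int_{\mathbb Z_p}f(x)\,d\mu_{-1}(x)=\lim_{N\to\infty}\sum_{x=0}^{p^N-1}f(x)(-1)^x$. The $q$-Euler numbers are $E_{n,q}=\int_{\mathbb Z_p}[x]_q^n\,d\mu_{-1}(x)$. Binomial coefficients $\binom{a}{m}=\frac{a(a-1)\cdots(a-m+1)}{m!}$ are the generalized ones (so $\binom{-1}{0}=1$ and $\binom{m-1}{m}=0$ for $m\ge1$). *)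

From HB Require Import structures.
From mathcomp Require Import all_boot all_order all_algebra.
From mathcomp Require Import reals exp.
Set Implicit Arguments. Unset Strict Implicit. Unset Printing Implicit Defensive.
Import Order.TTheory GRing.Theory Num.Theory.
Local Open Scope ring_scope.

Section Defs.
Variables (R : realType) (K : fieldType).

(* |.| : K -> R is a non-archimedean absolute value extending |.|_p *)
Definition nonarch_abs (p : nat) (absv : K -> R) : Prop :=
  [/\ forall x, 0 <= absv x,
      forall x, absv x = 0 -> x = 0,
      forall x y, absv (x * y) = absv x * absv y,
      forall x y, absv (x + y) <= Num.max (absv x) (absv y)
    & absv (p%:R) = (p%:R)^-1].

Definition cvg_to (absv : K -> R) (u : nat -> K) (l : K) : Prop :=
  forall eps : R, 0 < eps -> exists N : nat, forall n, (N <= n)%N -> absv (u n - l) < eps.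

Definition cauchy_seq (absv : K -> R) (u : nat -> K) : Prop :=
  forall eps : R, 0 < eps -> exists N : nat,
    forall m n, (N <= m)%N -> (N <= n)%N -> absv (u m - u n) < eps.

Definition complete_abs (absv : K -> R) : Prop :=
  forall u, cauchy_seq absv u -> exists l, cvg_to absv u l.

(* [x]_q for integer x; at q = 1 the (limiting) convention [x]_1 = x *)
Definition qnum (q : K) (x : int) : K :=
  if q == 1 then x%:~R else (1 - q ^ x) / (1 - q).

Definition qBernstein (q : K) (k n : nat) (x : nat) : K :=
  ('C(n, k))%:R * qnum q x ^+ k * qnum q (1 - x%:Z) ^+ (n - k).

(* Riemann-type sums of the fermionic p-adic integral *)
Definition ferm_sum (p : nat) (f : nat -> K) (N : nat) : K :=
  \sum_(x < p ^ N) f x * (-1) ^+ x.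

Definition is_ferm_integral (absv : K -> R) (p : nat) (f : nat -> K) (I : K) : Prop :=
  cvg_to absv (ferm_sum p f) I.

Definition gbinom (a : int) (m : nat) : K :=
  ratr ((\prod_(i < m) (a%:~R - (i : nat)%:R : rat)) / (m`!)%:R).

End Defs.

From HB Require Import structures.
From mathcomp Require Import all_boot all_order all_algebra.
From mathcomp Require Import reals exp.
From mathcomp Require Import ring lra zify.
From mathcomp Require boolp normedtype sequences.
Import Order.TTheory GRing.Theory Num.Theory normed_module.numFieldNormedType.Exports.
Set Implicit Arguments. Unset Strict Implicit. Unset Printing Implicit Defensive.
Local Open Scope ring_scope.

(* Put [z = (1 - q) [x]_q = 1 - q ^ x], so that [|z| <= |1 - q| < 1] and
   [[1 - x]_q = 1 - q [x]_q q ^ (- x)] with [q ^ (- x) = (1 - z) ^ (- 1)].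
   Expanding [[1 - x]_q ^ (n - k)] binomially and each [(1 - z) ^ (- l)] as a
   negative binomial series, the M-th truncation of the double series agrees with
   [B_{k,n}(x,q) / binom(n, k)] up to [|1 - q| ^ M], uniformly in [x].  All the
   integrands are bounded by 1 and p-adically Lipschitz, since [|[p]_q| <= 1/p]
   when [|1 - q| ^ (p - 1) < 1/p]; for such functions the fermionic Riemann sums
   are Cauchy, hence the integrals exist, and the integral is bounded by the sup
   norm.  Integrating the uniform estimate gives the convergence of the series. *)

Lemma gbinom_nat (K : fieldType) (l m : nat) :
  gbinom K (l%:Z + m%:Z - 1) m = ('C((l + m).-1, m))%:R.
Proof.
rewrite /gbinom; case: l => [|l].
  case: m => [|m]; first by rewrite big_ord0 fact0 divr1 bin0; exact: (ratr_nat K 1).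
  have -> : (0%:Z + m.+1%:Z - 1) = m%:Z by lia.
  by rewrite big_ord_recr /= bin_small // subrr mulr0 mul0r; exact: (ratr_nat K 0).
have -> : (l.+1%:Z + m%:Z - 1) = (l + m)%N%:Z by lia.
rewrite addSn /=.
have -> : \prod_(i < m) (((l + m)%N%:Z)%:~R - (i : nat)%:R : rat) = ((l + m) ^_ m)%:R.
  rewrite ffact_prod natr_prod; apply: eq_bigr => i _.
  by rewrite natrB // (leq_trans (ltnW (ltn_ord i))) ?leq_addl.
by rewrite -bin_ffact natrM mulfK ?ratr_nat // pnatr_eq0 -lt0n fact_gt0.
Qed.

Lemma sumr_sign (R : pzRingType) n : \sum_(j < n) (-1) ^+ j = (odd n)%:R :> R.
Proof.
elim: n => [|n ih]; first by rewrite big_ord0.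
by rewrite big_ord_recr /= ih -signr_odd; case: (odd n); rewrite /= ?subrr ?add0r.
Qed.

Lemma big_ord_mul_split (V : nmodType) (F : nat -> V) a b :
  \sum_(x < a * b) F x = \sum_(j < b) \sum_(i < a) F (i + a * j)%N.
Proof.
elim: b => [|b ih]; first by rewrite muln0 !big_ord0.
rewrite mulnS addnC big_split_ord /= ih big_ord_recr /=; congr (_ + _).
by apply: eq_bigr => i _; rewrite addnC.
Qed.

Section QInteger.
Variable K : fieldType.
Implicit Type q : K.

Definition qnat q (x : nat) : K := \sum_(i < x) q ^+ i.

Lemma subr1X_qnat q x : 1 - q ^+ x = (1 - q) * qnat q x.
Proof. by rewrite /qnat -[LHS]opprB subrX1 -mulNr opprB. Qed.

Lemma qnatD q a b : qnat q (a + b) = qnat q a + q ^+ a * qnat q b.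
Proof.
rewrite /qnat big_split_ord /= mulr_sumr; congr (_ + _).
by apply: eq_bigr => i _; rewrite exprD.
Qed.

Lemma qnatM q a b : qnat q (a * b) = qnat q a * qnat (q ^+ a) b.
Proof.
elim: b => [|b ih]; first by rewrite muln0 /qnat !big_ord0 mulr0.
rewrite mulnS addnC qnatD ih /qnat [in RHS]big_ord_recr /= mulrDr -exprM.
by congr (_ + _); rewrite mulrC.
Qed.

Lemma qnum_nat q (x : nat) : qnum q x = qnat q x.
Proof.
rewrite /qnum /qnat; case: eqP => [->|/eqP q1].
  by under eq_bigr do rewrite expr1n; rewrite sumr_const card_ord.
by rewrite -exprnP subr1X_qnat mulrC mulKf // subr_eq0 eq_sym.
Qed.

Lemma qnum_1subn q (x : nat) : q != 0 ->
  qnum q (1 - x%:Z) = 1 - q * (qnat q x / q ^+ x).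
Proof.
move=> q0; rewrite /qnum; case: eqP => [->|/eqP q1].
  rewrite /qnat expr1n divr1 mul1r; under eq_bigr do rewrite expr1n.
  by rewrite sumr_const card_ord intrB.
have q1' : 1 - q != 0 by rewrite subr_eq0 eq_sym.
have qx0 : q ^+ x != 0 by rewrite expf_neq0.
rewrite expfzDr // expr1z -exprnN.
have -> : qnat q x = (1 - q ^+ x) / (1 - q) by rewrite subr1X_qnat [_ * qnat q x]mulrC mulfK.
by move: (q ^+ x) qx0 => X X0; field; rewrite q1' X0.
Qed.

(* The truncation at order [M] of the series of [(1 - z) ^- l]; its coefficients
   ['C((l + m).-1, m)] are binom(l+m-1, m), including the case [l = 0]. *)
Definition negbin_trunc (l M : nat) (z : K) : K :=
  \sum_(m < M) ('C((l + m).-1, m))%:R * z ^+ m.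

Lemma mulr1B_negbin_truncS l M (z : K) : (1 - z) * negbin_trunc l.+1 M.+1 z =
  negbin_trunc l M.+1 z - ('C(l + M, M))%:R * z ^+ M.+1.
Proof.
elim: M => [|M ih].
  by rewrite /negbin_trunc !big_ord1 !addn0 /= !bin0 expr1 !mul1r mulr1.
rewrite /negbin_trunc big_ord_recr -/(negbin_trunc _ _ _) mulrDr ih.
rewrite [negbin_trunc l M.+2 z]/negbin_trunc big_ord_recr -/(negbin_trunc _ _ _) /=.
rewrite addnS /= binS natrD (exprS z M.+1).
by move: (negbin_trunc l M.+1 z) (z ^+ M.+1) ('C(l + M, M))%:R ('C(l + M, M.+1))%:R => *; ring.
Qed.

Definition bern_coef q (L l m : nat) : K :=
  gbinom K (l%:Z + m%:Z - 1) m * ('C(L, l))%:R * (-1) ^+ (l + m) * q ^+ l * (q - 1) ^+ m.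

Lemma bern_coef_expansion q (w u : K) k L M :
  w ^+ k * (1 - q * (w * u)) ^+ L
    - \sum_(m < M) \sum_(l < L.+1) bern_coef q L l m * w ^+ (l + m + k)
  = w ^+ k * \sum_(l < L.+1) ('C(L, l))%:R * (- q * w) ^+ l
      * (u ^+ l - negbin_trunc l M ((1 - q) * w)).
Proof.
have -> : \sum_(m < M) \sum_(l < L.+1) bern_coef q L l m * w ^+ (l + m + k)
    = w ^+ k * \sum_(l < L.+1) ('C(L, l))%:R * (- q * w) ^+ l * negbin_trunc l M ((1 - q) * w).
  rewrite exchange_big mulr_sumr; apply: eq_bigr => l _.
  rewrite /negbin_trunc !mulr_sumr; apply: eq_bigr => m _.
  have -> : (- q * w) ^+ l = (-1) ^+ l * q ^+ l * w ^+ l by rewrite -!exprMn mulN1r.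
  have -> : ((1 - q) * w) ^+ m = (-1) ^+ m * (q - 1) ^+ m * w ^+ m.
    by rewrite -!exprMn mulN1r opprB.
  rewrite /bern_coef gbinom_nat !exprD.
  by move: ((-1 : K) ^+ l) ((-1 : K) ^+ m) (q ^+ l) ((q - 1) ^+ m) (w ^+ l) (w ^+ m) => *; ring.
have -> : 1 - q * (w * u) = - q * w * u + 1 by ring.
rewrite exprD1n -mulrBr -sumrB; congr (_ * _); apply: eq_bigr => l _.
by rewrite exprMn mulrBr -mulr_natl mulrA.
Qed.

End QInteger.

Lemma exprn_lt_powR_inv (R : realType) (a t : R) (m : nat) : m != 0%N ->
  0 <= a -> 0 <= t -> t < powR a (- (m%:R)^-1) -> t ^+ m < a^-1.
Proof.
move=> m0 a0 t0 /(ltrXn2r m t0); rewrite m0 => /lt_le_trans; apply.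
rewrite -powR_mulrn ?powR_ge0 // -powRrM mulNr mulVf ?pnatr_eq0 //.
by rewrite powR_inv1.
Qed.

Lemma ler_piMl_trans (R : numDomainType) (a b c : R) :
  0 <= a -> a <= 1 -> 0 <= b -> b <= c -> a * b <= c.
Proof. by move=> a0 a1 b0; apply: le_trans; rewrite ler_piMl. Qed.

Lemma exprn_lt_eventually (R : realType) (r eps : R) : 0 <= r -> r < 1 -> 0 < eps ->
  exists N, r ^+ N < eps.
Proof.
move=> r0 r1 eps0; have r1' : `|r| < 1 by rewrite ger0_norm.
have [N _ rN] := pseudometric_normed_Zmodule.cvgr0_norm_lt _ (sequences.cvg_expr r1') _ eps0.
by exists N; have := rN N (leqnn N); rewrite /= ger0_norm ?exprn_ge0.
Qed.

Section NonArchimedean.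
Variables (R : realType) (K : fieldType) (absv : K -> R) (p : nat).
Hypotheses (p_prime : prime p) (absvP : nonarch_abs p absv).

Local Notation rho := ((p%:R : R)^-1).

Lemma absv_ge0 x : 0 <= absv x. Proof. by case: absvP => h _ _ _ _; apply: h. Qed.
Lemma absv_eq0 x : absv x = 0 -> x = 0. Proof. by case: absvP => _ h _ _ _; apply: h. Qed.
Lemma absvM x y : absv (x * y) = absv x * absv y.
Proof. by case: absvP => _ _ h _ _; apply: h. Qed.
Lemma absvD x y : absv (x + y) <= Num.max (absv x) (absv y).
Proof. by case: absvP => _ _ _ h _; apply: h. Qed.
Lemma absv_p : absv p%:R = rho. Proof. by case: absvP. Qed.

Lemma rho_ge0 : 0 <= rho. Proof. by rewrite invr_ge0 ler0n. Qed.
Lemma rho_lt1 : rho < 1.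
Proof. by rewrite invf_lt1 ?ltr0n ?ltr1n ?prime_gt0 ?prime_gt1. Qed.
Lemma rhoX_ge0 N : 0 <= rho ^+ N. Proof. exact: exprn_ge0 rho_ge0. Qed.

Lemma absv1 : absv 1 = 1.
Proof.
have a1 : absv 1 != 0 by apply/eqP => /absv_eq0/eqP; rewrite oner_eq0.
by apply: (mulfI a1); rewrite -absvM !mulr1.
Qed.

Lemma absv0 : absv 0 = 0.
Proof.
have : absv 0 * (1 - rho) = 0 by rewrite mulrBr mulr1 -absv_p -absvM mul0r subrr.
move/eqP; rewrite mulf_eq0 subr_eq0 => /orP [/eqP //|/eqP rho1].
by move: rho_lt1; rewrite -rho1 ltxx.
Qed.

Lemma absvN1 : absv (-1) = 1.
Proof.
have a0 := absv_ge0 (-1).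
have : absv (-1) ^+ 2 = 1 by rewrite expr2 -absvM mulrNN mulr1 absv1.
by move/eqP; rewrite sqrf_eq1 => /orP [/eqP //|/eqP a1]; lra.
Qed.

Lemma absvN x : absv (- x) = absv x.
Proof. by rewrite -mulN1r absvM absvN1 mul1r. Qed.

Lemma absvB x y : absv (x - y) = absv (y - x).
Proof. by rewrite -absvN opprB. Qed.

Lemma absvD_le x y c : absv x <= c -> absv y <= c -> absv (x + y) <= c.
Proof. by move=> xc yc; apply: le_trans (absvD x y) _; rewrite ge_max xc yc. Qed.

Lemma absvX x n : absv (x ^+ n) = absv x ^+ n.
Proof. by elim: n => [|n ih]; rewrite ?absv1 // !exprS absvM ih. Qed.

Lemma absvV x : absv x^-1 = (absv x)^-1.
Proof.
have [->|x0] := eqVneq x 0; first by rewrite invr0 absv0 invr0.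
have a0 : absv x != 0 by apply: contra_neq x0; apply: absv_eq0.
by apply: (mulfI a0); rewrite -absvM !mulfV // absv1.
Qed.

Lemma absv_sign n : absv ((-1) ^+ n) = 1.
Proof. by rewrite absvX absvN1 expr1n. Qed.

Lemma absv_sum_le (I : Type) (r : seq I) (P : pred I) (F : I -> K) c : 0 <= c ->
  (forall i, P i -> absv (F i) <= c) -> absv (\sum_(i <- r | P i) F i) <= c.
Proof.
move=> c0 Fc; apply: (big_ind (fun x => absv x <= c)) => //.
- by rewrite absv0.
- by move=> x y; apply: absvD_le.
Qed.

Lemma absv_natr_le1 n : absv n%:R <= 1.
Proof.
elim: n => [|n ih]; first by rewrite absv0.
by rewrite -addn1 natrD; apply: absvD_le; rewrite ?absv1.
Qed.

Lemma absv_1sub_le1 z : absv z <= 1 -> absv (1 - z) <= 1.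
Proof. by move=> z1; apply: absvD_le; rewrite ?absv1 ?absvN. Qed.

(* [K] has characteristic 0: if [r%:R = 0] with [r] coprime to [p], a Bezout relation
   makes [1] a multiple of [p%:R], whence [absv 1 <= rho]. *)
Lemma natr_neq0 m : (0 < m)%N -> m%:R != 0 :> K.
Proof.
move=> m0; have [r /eqP pr1 ->] := pfactor_coprime p_prime m0.
have pX0 : (p ^ logn p m)%:R != 0 :> K.
  rewrite natrX expf_neq0 //; apply/eqP => p0; move: absv_p.
  by rewrite p0 absv0 => /esym/eqP; rewrite invr_eq0 pnatr_eq0 eqn0Ngt prime_gt0.
rewrite natrM mulf_neq0 //; apply/eqP => r0.
have [u _] := Bezoutl r (prime_gt0 p_prime); rewrite pr1 => /dvdnP [v uv].
have : absv 1 <= rho.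
  have -> : 1 = (v * p)%:R :> K by rewrite -uv natrD natrM r0 mulr0 addr0.
  by rewrite natrM absvM absv_p ler_piMl ?rho_ge0 ?absv_natr_le1.
by rewrite absv1 leNgt rho_lt1.
Qed.

Lemma absv_qnat_le1 q x : absv q <= 1 -> absv (qnat q x) <= 1.
Proof. by move=> q1; apply: absv_sum_le => // i _; rewrite absvX exprn_ile1 ?absv_ge0. Qed.

Lemma absv_1subX_le q a : absv q <= 1 -> absv (1 - q ^+ a) <= absv (1 - q).
Proof. by move=> q1; rewrite subr1X_qnat absvM ler_piMr ?absv_ge0 ?absv_qnat_le1. Qed.

(* With [s = q - 1], [qnat q p = \sum_(i < p) 'C(p, i.+1) s ^+ i]: every term but
   the last is divisible by [p], and the last one is [s ^+ p.-1]. *)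
Lemma absv_qnat_p q : absv (1 - q) ^+ p.-1 <= rho -> absv (qnat q p) <= rho.
Proof.
move=> q_near1; have p1 : (0 < p.-1)%N by rewrite -subn1 subn_gt0 prime_gt1.
have [->|q1] := eqVneq q 1.
  by rewrite /qnat; under eq_bigr do rewrite expr1n; rewrite sumr_const card_ord absv_p.
set s := q - 1; have s0 : s != 0 by rewrite subr_eq0.
have s1 : absv s <= 1.
  by rewrite absvB -(expr_le1 p1) ?absv_ge0 // (le_trans q_near1) ?ltW ?rho_lt1.
have -> : qnat q p = \sum_(i < p) s ^+ i *+ 'C(p, i.+1).
  have qs : q = s + 1 by rewrite subrK.
  apply: (mulfI s0); rewrite /qnat /s -subrX1 -/s {1}qs exprD1n big_ord_recl.
  rewrite expr0 bin0 mulr1n addrC addKr mulr_sumr.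
  by apply: eq_bigr => i _; rewrite mulrnAr -exprS.
apply: absv_sum_le; first exact: rho_ge0.
move=> i _; have [ip|] := ltnP i.+1 p.
  have /dvdnP [c ->] : (p %| 'C(p, i.+1))%N by apply: prime_dvd_bin.
  rewrite -mulr_natr natrM !absvM absv_p absvX mulrA.
  by rewrite ler_piMl ?rho_ge0 // mulr_ile1 ?exprn_ge0 ?exprn_ile1 ?absv_ge0 ?absv_natr_le1.
move=> pi; have ip : i.+1 = p by apply/eqP; rewrite eqn_leq pi ltn_ord.
rewrite ip binn mulr1n absvX /s absvB.
by have -> : nat_of_ord i = p.-1 by rewrite -(congr1 predn ip).
Qed.

Definition unit_lipschitz (f : nat -> K) : Prop :=
  (forall x, absv (f x) <= 1) /\
  forall N x y, absv (f (x + p ^ N * y)%N - f x) <= rho ^+ N.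

Lemma unit_lipschitz_cst c : absv c <= 1 -> unit_lipschitz (fun=> c).
Proof. by move=> c1; split=> // N x y; rewrite subrr absv0 rhoX_ge0. Qed.

Lemma unit_lipschitzM f g :
  unit_lipschitz f -> unit_lipschitz g -> unit_lipschitz (fun x => f x * g x).
Proof.
move=> [f1 fL] [g1 gL]; split=> [x|N x y].
  by rewrite absvM mulr_ile1 ?absv_ge0.
set x' := (x + p ^ N * y)%N.
have -> : f x' * g x' - f x * g x = f x' * (g x' - g x) + (f x' - f x) * g x.
  by rewrite mulrBr mulrBl addrA subrK.
apply: absvD_le; rewrite absvM.
  by apply: le_trans (gL N x y); rewrite ler_piMl ?absv_ge0.
by apply: le_trans (fL N x y); rewrite ler_piMr ?absv_ge0.
Qed.

Lemma unit_lipschitzX f j : unit_lipschitz f -> unit_lipschitz (fun x => f x ^+ j).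
Proof.
move=> fL; elim: j => [|j ih]; first by apply: unit_lipschitz_cst; rewrite absv1.
have -> : (fun x => f x ^+ j.+1) = (fun x => f x * f x ^+ j).
  by apply: boolp.funext => x; rewrite exprS.
exact: unit_lipschitzM.
Qed.

Lemma unit_lipschitzB f g :
  unit_lipschitz f -> unit_lipschitz g -> unit_lipschitz (fun x => f x - g x).
Proof.
move=> [f1 fL] [g1 gL]; split=> [x|N x y]; first by apply: absvD_le; rewrite ?absvN.
set x' := (x + p ^ N * y)%N.
have -> : f x' - g x' - (f x - g x) = (f x' - f x) - (g x' - g x) by ring.
by apply: absvD_le; rewrite ?absvN; [apply: fL | apply: gL].
Qed.

Hypothesis p_odd : odd p.

(* Write [x < p ^ N.+1] as [i + p ^ N * j]; as [p] is odd the sign splits and the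
   [j]-sum of signs is [1], so the difference is a sum of terms [f (i + p ^ N * j) - f i]. *)
Lemma ferm_sumS_sub f N : unit_lipschitz f ->
  absv (ferm_sum p f N.+1 - ferm_sum p f N) <= rho ^+ N.
Proof.
move=> [_ fL].
have sign_split i j : (-1) ^+ (i + p ^ N * j)%N = (-1) ^+ i * (-1) ^+ j :> K.
  rewrite exprD exprM; congr (_ * ((_ : K) ^+ _)).
  by rewrite -signr_odd oddX p_odd orbT expr1.
have -> : ferm_sum p f N.+1 =
    \sum_(j < p) \sum_(i < p ^ N) f (i + p ^ N * j)%N * ((-1) ^+ i * (-1) ^+ j).
  rewrite /ferm_sum expnSr (big_ord_mul_split (fun x => f x * (-1) ^+ x)).
  apply: eq_bigr => j _.
  by apply: eq_bigr => i _; rewrite sign_split.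
have -> : ferm_sum p f N = \sum_(j < p) \sum_(i < p ^ N) f i * ((-1) ^+ i * (-1) ^+ j).
  have sign_sum : \sum_(j < p) (-1) ^+ j = 1 :> K by rewrite sumr_sign p_odd.
  rewrite -[LHS]mul1r -{1}sign_sum mulr_suml.
  apply: eq_bigr => j _; rewrite mulr_sumr; apply: eq_bigr => i _.
  by rewrite mulrC -mulrA.
rewrite -sumrB; apply: absv_sum_le => [|j _]; first exact: rhoX_ge0.
rewrite -sumrB; apply: absv_sum_le => [|i _]; first exact: rhoX_ge0.
by rewrite -mulrBl absvM absvM !absv_sign !mulr1.
Qed.

Lemma ferm_sum_cauchy f N m : unit_lipschitz f -> (N <= m)%N ->
  absv (ferm_sum p f m - ferm_sum p f N) <= rho ^+ N.
Proof.
move=> fL /subnK <-; elim: (m - N)%N => [|d ih]; first by rewrite subrr absv0 rhoX_ge0.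
rewrite addSn -(subrK (ferm_sum p f (d + N)) (ferm_sum p f (d + N).+1)) -addrA.
apply: (absvD_le _ ih); apply: le_trans (ferm_sumS_sub _ fL) _.
by rewrite ler_wiXn2l ?rho_ge0 ?ltW ?rho_lt1 ?leq_addl.
Qed.

Lemma ferm_integral_exists f : complete_abs absv -> unit_lipschitz f ->
  exists I, is_ferm_integral absv p f I.
Proof.
move=> absv_complete fL; apply: absv_complete => eps eps0.
have [N rhoN] := exprn_lt_eventually rho_ge0 rho_lt1 eps0.
exists N => m n Nm Nn; rewrite -(subrK (ferm_sum p f N) (ferm_sum p f m)) -addrA.
apply: le_lt_trans (absvD _ _) _; rewrite gt_max (le_lt_trans (ferm_sum_cauchy fL Nm)) //.
by rewrite -opprB absvN (le_lt_trans (ferm_sum_cauchy fL Nn)).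
Qed.

Lemma cvg_toD u v a b : cvg_to absv u a -> cvg_to absv v b ->
  cvg_to absv (fun n => u n + v n) (a + b).
Proof.
move=> ua vb eps eps0; have [N1 uN] := ua eps eps0; have [N2 vN] := vb eps eps0.
exists (maxn N1 N2) => n; rewrite geq_max => /andP [n1 n2].
rewrite opprD addrACA; apply: le_lt_trans (absvD _ _) _.
by rewrite gt_max uN ?vN.
Qed.

Lemma cvg_toZ c u a : cvg_to absv u a -> cvg_to absv (fun n => c * u n) (c * a).
Proof.
move=> ua eps eps0; have [->|c0] := eqVneq c 0.
  by exists 0%N => n _; rewrite !mul0r subrr absv0.
have ac : 0 < absv c by rewrite lt_def absv_ge0 andbT; apply: contra_neq c0; apply: absv_eq0.
have [N uN] := ua (eps / absv c) (divr_gt0 eps0 ac).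
by exists N => n Nn; rewrite -mulrBr absvM -ltr_pdivlMl // mulrC uN.
Qed.

Lemma is_ferm_integralD f g a b : is_ferm_integral absv p f a ->
  is_ferm_integral absv p g b -> is_ferm_integral absv p (fun x => f x + g x) (a + b).
Proof.
move=> fa gb; rewrite /is_ferm_integral.
have -> : ferm_sum p (fun x => f x + g x) = fun N => ferm_sum p f N + ferm_sum p g N.
  by apply: boolp.funext => N; rewrite /ferm_sum -big_split; apply: eq_bigr => x _; rewrite mulrDl.
exact: cvg_toD.
Qed.

Lemma is_ferm_integralZ c f a : is_ferm_integral absv p f a ->
  is_ferm_integral absv p (fun x => c * f x) (c * a).
Proof.
move=> fa; rewrite /is_ferm_integral.
have -> : ferm_sum p (fun x => c * f x) = fun N => c * ferm_sum p f N.
  by apply: boolp.funext => N; rewrite /ferm_sum mulr_sumr; apply: eq_bigr => x _; rewrite mulrA.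
exact: cvg_toZ.
Qed.

Lemma is_ferm_integral_sum (F : nat -> nat -> K) (a : nat -> K) M :
  (forall i, is_ferm_integral absv p (F i) (a i)) ->
  is_ferm_integral absv p (fun x => \sum_(i < M) F i x) (\sum_(i < M) a i).
Proof.
move=> Fa; elim: M => [|M ih].
  rewrite big_ord0; under boolp.eq_fun do rewrite big_ord0.
  by move=> eps eps0; exists 0%N => N _; rewrite /ferm_sum big1 => [|x _]; rewrite ?mul0r ?subrr ?absv0.
rewrite big_ord_recr; under boolp.eq_fun do rewrite big_ord_recr.
exact: is_ferm_integralD.
Qed.

Lemma absv_ferm_integralB_le f g a b c : is_ferm_integral absv p f a ->
  is_ferm_integral absv p g b -> 0 <= c -> (forall x, absv (f x - g x) <= c) ->
  absv (a - b) <= c.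
Proof.
move=> fa gb c0 fg; have := is_ferm_integralD fa (is_ferm_integralZ (-1) gb).
rewrite mulN1r; under boolp.eq_fun do rewrite mulN1r.
move=> fga; rewrite leNgt; apply/negP => ab_gt_c.
have [N fgN] := fga _ (le_lt_trans c0 ab_gt_c).
set S := ferm_sum p (fun x => f x - g x) N.
have S_le : absv S <= c by apply: absv_sum_le => // x _; rewrite absvM absv_sign mulr1.
have := absvD (a - b - S) S.
by rewrite subrK [absv (a - b - _)]absvB leNgt gt_max fgN // (le_lt_trans S_le ab_gt_c).
Qed.

Lemma negbin_trunc_rem l M z : absv z <= 1 ->
  exists2 B, absv B <= 1 & (1 - z) ^+ l * negbin_trunc l M z = 1 - z ^+ M * B.
Proof.
move=> z1; case: M => [|M].
  by exists 1; rewrite ?absv1 // /negbin_trunc big_ord0 mulr0 expr0 mulr1 subrr.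
elim: l => [|l [B B1 eB]].
  exists 0; rewrite ?absv0 // mulr0 subr0 expr0 mul1r /negbin_trunc big_ord_recl /=.
  by rewrite bin0 expr0 mulr1 big1 ?addr0 // => i _; rewrite bin_small ?mul0r.
exists (B + ('C(l + M, M))%:R * (1 - z) ^+ l).
  apply: absvD_le => //; rewrite absvM absvX.
  by rewrite mulr_ile1 ?exprn_ge0 ?absv_ge0 ?absv_natr_le1 ?exprn_ile1 ?absv_ge0 ?absv_1sub_le1.
rewrite exprSr -mulrA mulr1B_negbin_truncS mulrBr eB.
by move: ((1 - z) ^+ l) (z ^+ M.+1) ('C(l + M, M))%:R => *; ring.
Qed.

Lemma absv_negbin_trunc_err u z l M : absv z <= 1 -> absv u = 1 -> u * (1 - z) = 1 ->
  absv (u ^+ l - negbin_trunc l M z) <= absv z ^+ M.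
Proof.
move=> z1 u1 uz; have [B B1 eB] := negbin_trunc_rem l M z1.
have -> : u ^+ l - negbin_trunc l M z = u ^+ l * (z ^+ M * B).
  have -> : z ^+ M * B = 1 - (1 - z) ^+ l * negbin_trunc l M z by rewrite eB; ring.
  by rewrite mulrBr mulr1 mulrA -exprMn uz expr1n mul1r.
by rewrite !absvM absvX u1 expr1n mul1r absvX ler_piMr ?exprn_ge0 ?absv_ge0.
Qed.

Section NearOne.
Variable q : K.
Hypothesis q_near1 : absv (1 - q) ^+ p.-1 < rho.

Lemma absv_1subq_lt1 : absv (1 - q) < 1.
Proof.
have p1 : (0 < p.-1)%N by rewrite -subn1 subn_gt0 prime_gt1.
by rewrite -(expr_lt1 p1) ?absv_ge0 // (lt_trans q_near1) ?rho_lt1.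
Qed.

Lemma absvq : absv q = 1.
Proof.
have q1 := absv_1subq_lt1.
apply/eqP; rewrite eq_le; apply/andP; split.
  have -> : q = 1 - (1 - q) by rewrite opprB addrC subrK.
  by apply: absvD_le; rewrite ?absv1 // absvN ltW.
rewrite leNgt; apply/negP => q_lt1.
have := absvD q (1 - q); rewrite addrC subrK absv1 leNgt gt_max.
by rewrite q_lt1 q1.
Qed.

Lemma q_neq0 : q != 0.
Proof. by apply: contra_eq_neq absvq => ->; rewrite absv0 eq_sym oner_neq0. Qed.

Lemma absv_qnat_pXM N y : absv (qnat q (p ^ N * y)) <= rho ^+ N.
Proof.
rewrite qnatM absvM -[rho ^+ N]mulr1 ler_pM ?absv_ge0 ?absv_qnat_le1 //; last first.
  by rewrite absvX absvq expr1n.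
elim: N => [|N ih]; first by rewrite expn0 /qnat big_ord1 expr0 absv1.
rewrite expnSr qnatM absvM exprSr ler_pM ?absv_ge0 // absv_qnat_p //.
apply: le_trans (ltW q_near1); apply: lerXn2r; rewrite ?nnegrE ?absv_ge0 //.
by rewrite absv_1subX_le ?absvq.
Qed.

Lemma unit_lipschitz_qnat : unit_lipschitz (qnat q).
Proof.
split=> [x|N x y]; first by rewrite absv_qnat_le1 ?absvq.
by rewrite qnatD addrC addKr absvM absvX absvq expr1n mul1r absv_qnat_pXM.
Qed.

Lemma unit_lipschitz_qpowV : unit_lipschitz (fun x => (q ^+ x)^-1).
Proof.
have absv_qV x : absv (q ^+ x)^-1 = 1 by rewrite absvV absvX absvq expr1n invr1.
split=> [x|N x y]; first by rewrite absv_qV.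
have qX0 : q ^+ (p ^ N * y) != 0 by rewrite expf_neq0 ?q_neq0.
rewrite exprD invfM -[X in _ - X]mulr1 -mulrBr absvM absv_qV mul1r.
rewrite -[X in _ - X](mulVf qX0) -[X in X - _]mulr1 -mulrBr absvM absv_qV mul1r.
rewrite subr1X_qnat absvM -[rho ^+ N]mul1r ler_pM ?absv_ge0 ?absv_qnat_pXM //.
exact: ltW absv_1subq_lt1.
Qed.

Definition qBernstein_quot (k L x : nat) : K :=
  qnat q x ^+ k * (1 - q * (qnat q x / q ^+ x)) ^+ L.

Lemma qBernstein_div_binom k n x : (k <= n)%N ->
  qBernstein q k n x / ('C(n, k))%:R = qBernstein_quot k (n - k) x.
Proof.
move=> kn; have C0 : ('C(n, k))%:R != 0 :> K by rewrite natr_neq0 ?bin_gt0.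
rewrite /qBernstein /qBernstein_quot qnum_nat qnum_1subn ?q_neq0 //.
by rewrite -(mulrA _ (qnat q x ^+ k)) mulrAC mulfV ?mul1r.
Qed.

Lemma unit_lipschitz_qBernstein_quot k L : unit_lipschitz (qBernstein_quot k L).
Proof.
apply: unit_lipschitzM; apply: unit_lipschitzX; first exact: unit_lipschitz_qnat.
apply: unit_lipschitzB; first by apply: unit_lipschitz_cst; rewrite absv1.
apply: unit_lipschitzM; first by apply: unit_lipschitz_cst; rewrite absvq.
exact: unit_lipschitzM unit_lipschitz_qnat unit_lipschitz_qpowV.
Qed.

Lemma absv_bern_trunc_err k L M x :
  absv (qBernstein_quot k L x - \sum_(m < M) \sum_(l < L.+1) bern_coef q L l m * qnat q x ^+ (l + m + k))
    <= absv (1 - q) ^+ M.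
Proof.
have [w1 _] := unit_lipschitz_qnat; have absv_q1 := ltW absv_1subq_lt1.
have z_le : absv ((1 - q) * qnat q x) <= absv (1 - q) by rewrite absvM ler_piMr ?absv_ge0.
rewrite /qBernstein_quot bern_coef_expansion absvM absvX.
apply: ler_piMl_trans; rewrite ?exprn_ge0 ?exprn_ile1 ?absv_ge0 //.
apply: absv_sum_le => [|l _]; first by rewrite exprn_ge0 ?absv_ge0.
rewrite !absvM; apply: ler_piMl_trans; rewrite ?mulr_ge0 ?absv_ge0 //.
  rewrite mulr_ile1 ?absv_ge0 ?absv_natr_le1 // absvX exprn_ile1 ?absv_ge0 //.
  by rewrite absvM absvN absvq mul1r.
have u1 : absv (q ^+ x)^-1 = 1 by rewrite absvV absvX absvq expr1n invr1.
have uz : (q ^+ x)^-1 * (1 - (1 - q) * qnat q x) = 1.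
  by rewrite -subr1X_qnat opprB addrC subrK mulVf ?expf_neq0 ?q_neq0.
apply: le_trans (absv_negbin_trunc_err l M (le_trans z_le absv_q1) u1 uz) _.
by rewrite lerXn2r ?nnegrE ?absv_ge0.
Qed.

Lemma cvg_bern_series (E : nat -> K) I k L :
  (forall j, is_ferm_integral absv p (fun x => qnat q x ^+ j) (E j)) ->
  is_ferm_integral absv p (qBernstein_quot k L) I ->
  cvg_to absv (fun M => \sum_(m < M) \sum_(l < L.+1) bern_coef q L l m * E (l + m + k)%N) I.
Proof.
move=> qnatX_E hI eps eps0.
have [N qN] := exprn_lt_eventually (absv_ge0 (1 - q)) absv_1subq_lt1 eps0.
exists N => M NM; rewrite absvB; apply: le_lt_trans qN.
apply: le_trans (_ : absv (1 - q) ^+ M <= _); last first.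
  by rewrite ler_wiXn2l ?absv_ge0 ?ltW ?absv_1subq_lt1.
have trunc_int : is_ferm_integral absv p
    (fun x => \sum_(m < M) \sum_(l < L.+1) bern_coef q L l m * qnat q x ^+ (l + m + k))
    (\sum_(m < M) \sum_(l < L.+1) bern_coef q L l m * E (l + m + k)%N).
  apply: (is_ferm_integral_sum
    (F := fun m x => \sum_(l < L.+1) bern_coef q L l m * qnat q x ^+ (l + m + k))
    (a := fun m => \sum_(l < L.+1) bern_coef q L l m * E (l + m + k)%N)) => m.
  apply: (is_ferm_integral_sum (F := fun l x => bern_coef q L l m * qnat q x ^+ (l + m + k))
    (a := fun l => bern_coef q L l m * E (l + m + k)%N)) => l.
  exact: is_ferm_integralZ.
exact: absv_ferm_integralB_le hI trunc_int (exprn_ge0 _ (absv_ge0 _)) (absv_bern_trunc_err k L M).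
Qed.

End NearOne.

End NonArchimedean.

Theorem mainTheorem6 (R : realType) (K : fieldType) (absv : K -> R) (p : nat)
  (q : K) (k n : nat) :
  prime p -> odd p ->
  nonarch_abs p absv -> complete_abs absv ->
  absv (1 - q) < powR (p%:R) (- ((p.-1)%:R)^-1) ->
  (k <= n)%N ->
  exists (E : nat -> K) (I : K),
    (forall j, is_ferm_integral absv p (fun x => qnum q x ^+ j) (E j)) /\
    is_ferm_integral absv p (fun x => qBernstein q k n x / ('C(n, k))%:R) I /\
    cvg_to absv
      (fun M => \sum_(m < M) \sum_(l < (n - k).+1)
          gbinom K (l%:Z + m%:Z - 1) m * ('C(n - k, l))%:R * (-1) ^+ (l + m)
          * q ^+ l * (q - 1) ^+ m * E (l + m + k)%N)
      I.
Proof.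
move=> p_prime p_odd absvP absv_complete q_near1 kn.
have {}q_near1 : absv (1 - q) ^+ p.-1 < (p%:R)^-1.
  by rewrite exprn_lt_powR_inv ?ler0n ?(absv_ge0 absvP) // -lt0n -subn1 subn_gt0 prime_gt1.
have integral_exists := ferm_integral_exists p_prime absvP p_odd absv_complete.
have qnum_qnat j : (fun x : nat => qnum q x ^+ j) = (fun x => qnat q x ^+ j).
  by apply: boolp.funext => x; rewrite qnum_nat.
have qnumX_int j : exists E, is_ferm_integral absv p (fun x : nat => qnum q x ^+ j) E.
  rewrite qnum_qnat; apply: integral_exists.
  exact: unit_lipschitzX (unit_lipschitz_qnat p_prime absvP q_near1).
have [E qnumX_E] := boolp.choice qnumX_int.
have [I bern_I] := integral_exists _
  (unit_lipschitz_qBernstein_quot p_prime absvP q_near1 k (n - k)).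
have -> : (fun x => qBernstein q k n x / ('C(n, k))%:R) = qBernstein_quot q k (n - k).
  by apply: boolp.funext => x; rewrite (qBernstein_div_binom p_prime absvP q_near1).
exists E, I; split=> //; split=> //.
have qnatX_E j : is_ferm_integral absv p (fun x => qnat q x ^+ j) (E j).
  by rewrite -qnum_qnat.
by have := cvg_bern_series p_prime absvP q_near1 qnatX_E bern_I.
Qed.
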